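(* The operator $\mathbf{V}\mapsto\mathbf{V}^{\mathsf{bar}}$ on the lattice of pseudovarieties of finite semigroups preserves the property of being join irreducible. In particular, if $\llbracket S\rrbracket$ is join irreducible for a finite semigroup $S$, then $\llbracket S^{\mathsf{bar}}\rrbracket$ is join irreducible. Further, if $\operatorname{Excl}(S)=\llbracket \mathbf{u}\approx\mathbf{v}\rrbracket$ where $\mathbf{u},\mathbf{v}\in\widehat{A^+}$, then \[\operatorname{Excl}(S^{\mathsf{bar}})=\llbracket(\mathbf{e}z\mathbf{u})^{\omega}\approx(\mathbf{e}z\mathbf{v})^{\omega}\rrbracket,\] where $z\notin A$ and $\mathbf{e}$ is an idempotent in the minimal ideal of $\widehat{(A\cup\{z\})^+}$.
   Context: All semigroups are finite. A pseudovariety is a class of finite semigroups closed under finite direct products, subsemigroups and homomorphic images; $\llbracket S\rrbracket$ (resp. $\llbracket\mathscr{K}\rrbracket$) is the pseudovariety generated by $S$ (resp. a class $\mathscr{K}$), and $\llbracket\Sigma\rrbracket$ is the pseudovariety defined by a set $\Sigma$ of pseudoidentities. $\widehat{A^+}$ is the free profinite semigroup on $A$, and $\mathbf{x}^\omega$ denotes the idempotent power. A pseudovariety $\mathbf{V}$ is join irreducible if for every set $\mathscr{X}$ of pseudovarieties, $\mathbf{V}\subseteq\bigvee\mathscr{X}$ implies $\mathbf{V}\subseteq\mathbf{X}$ for some $\mathbf{X}\in\mathscr{X}$. $\operatorname{Excl}(S)$ is the class of finite semigroups $T$ with $S\notin\llbracket T\rrbracket$. For a semigroup $S$, $S^\bullet=S$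 if $S$ is a monoid and $S^\bullet=S^I$ ($S$ with an external identity adjoined) otherwise; $S$ acts faithfully on the right of $S^\bullet$ by right multiplication, and $S^{\mathsf{bar}}$ is the semigroup of transformations of $S^\bullet$ (acting on the right, composed left to right) consisting of these right multiplications together with all constant maps on $S^\bullet$. For a pseudovariety $\mathbf{V}$, $\mathbf{V}^{\mathsf{bar}}=\llbracket S^{\mathsf{bar}}\mid S\in\mathbf{V}\rrbracket$. *)

From mathcomp Require Import all_boot.
Set Implicit Arguments. Unset Strict Implicit. Unset Printing Implicit Defensive.

Record finSemigroup := FinSemigroup {
  fs_car :> finType;
  fs_mul : fs_car -> fs_car -> fs_car;
  fs_assoc : associative fs_mul;
  fs_ne : inhabited fs_car }.
Arguments fs_mul {f}.

Definition hom (S T : finSemigroup) (f : S -> T) :=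
  forall x y : S, f (fs_mul x y) = fs_mul (f x) (f y).

Definition sgClass := finSemigroup -> Prop.

(* direct products: trivial semigroup (empty product) and binary products *)
Definition triv_sg : finSemigroup :=
  @FinSemigroup unit (fun _ _ => tt) (fun _ _ _ => erefl) (inhabits tt).

Section Prod.
Variables S T : finSemigroup.
Definition prod_mul (x y : (S * T)%type) : (S * T)%type :=
  (fs_mul x.1 y.1, fs_mul x.2 y.2).
Lemma prod_mulA : associative prod_mul.
Proof. by move=> [a b] [c d] [e f]; rewrite /prod_mul /= !fs_assoc. Qed.
Lemma prod_ne : inhabited (S * T)%type.
Proof. by case: (fs_ne S) => s; case: (fs_ne T) => t; constructor; exact: (s, t). Qed.
Definition prod_sg : finSemigroup := FinSemigroup prod_mulA prod_ne.
End Prod.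

(* a pseudovariety: closed under homomorphic images, subsemigroups
   (injective homomorphisms, hence also isomorphic copies) and finite
   direct products *)
Definition pseudovariety (V : sgClass) : Prop :=
  [/\ (forall (S T : finSemigroup) (f : S -> T),
         hom f -> (forall y, exists x, f x = y) -> V S -> V T),
      (forall (S T : finSemigroup) (f : T -> S),
         hom f -> injective f -> V S -> V T),
      V triv_sg &
      (forall S T, V S -> V T -> V (prod_sg S T))].

Definition gen (K : sgClass) : sgClass :=
  fun T => forall V, pseudovariety V -> (forall S, K S -> V S) -> V T.

Definition subclass (V W : sgClass) := forall S, V S -> W S.

Definition join (XX : sgClass -> Prop) : sgClass :=
  gen (fun T => exists2 X, XX X & X T).

Definition join_irreducible (V : sgClass) : Prop :=
  forall XX : sgClass -> Prop, (forall X, XX X -> pseudovariety X) ->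
    subclass V (join XX) -> exists2 X, XX X & subclass V X.

Definition iso (S T : finSemigroup) :=
  exists f : S -> T, hom f /\ bijective f.
Definition pv_of (S : finSemigroup) : sgClass := gen (iso S).

Definition Excl (S : finSemigroup) : sgClass := fun T => ~ pv_of T S.

Section Bar.
Variable S : finSemigroup.

Definition is_monoid : bool :=
  [exists e : S, [forall x : S, (fs_mul e x == x) && (fs_mul x e == x)]].

(* S^bullet : S if S is a monoid, S^I = option S (None = I) otherwise *)
Definition Sdot_b (b : bool) : finType := if b then fs_car S else option S.
Definition Sdot : finType := Sdot_b is_monoid.

Definition act_b (b : bool) : Sdot_b b -> S -> Sdot_b b :=
  match b as b0 return Sdot_b b0 -> S -> Sdot_b b0 with
  | true => fun a s => fs_mul a s
  | false => fun a s => Some (match a with Some a' => fs_mul a' s | None => s end)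
  end.
Lemma act_bA (b : bool) (a : Sdot_b b) (s t : S) : act_b (act_b a s) t = act_b a (fs_mul s t).
Proof. by case: b a => [a|[a|]] /=; rewrite ?fs_assoc. Qed.

Definition act : Sdot -> S -> Sdot := @act_b is_monoid.

(* transformations act on the right, composed left to right *)
Definition rmult (s : S) : {ffun Sdot -> Sdot} := [ffun a => act a s].
Definition cst (a : Sdot) : {ffun Sdot -> Sdot} := [ffun _ => a].
Definition tcomp (f g : {ffun Sdot -> Sdot}) : {ffun Sdot -> Sdot} :=
  [ffun x => g (f x)].

Definition in_bar (f : {ffun Sdot -> Sdot}) : bool :=
  [exists s : S, f == rmult s] || [exists a : Sdot, f == cst a].

Lemma in_bar_comp f g : in_bar f -> in_bar g -> in_bar (tcomp f g).
Proof.
case/orP=> [/existsP[s /eqP->]|/existsP[a /eqP->]];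
case/orP=> [/existsP[t /eqP->]|/existsP[b /eqP->]].
- apply/orP; left; apply/existsP; exists (fs_mul s t); apply/eqP/ffunP=> x.
  by rewrite !ffunE /act act_bA.
- by apply/orP; right; apply/existsP; exists b; apply/eqP/ffunP=> x; rewrite !ffunE.
- apply/orP; right; apply/existsP; exists (act a t); apply/eqP/ffunP=> x.
  by rewrite !ffunE.
- by apply/orP; right; apply/existsP; exists b; apply/eqP/ffunP=> x; rewrite !ffunE.
Qed.

Definition bar_car : finType := {f : {ffun Sdot -> Sdot} | in_bar f}.
Definition bar_mul (x y : bar_car) : bar_car :=
  exist _ (tcomp (val x) (val y)) (in_bar_comp (valP x) (valP y)).
Lemma bar_mulA : associative bar_mul.
Proof. by move=> x y z; apply: val_inj; apply/ffunP=> a; rewrite /= !ffunE. Qed.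
Lemma bar_ne : inhabited bar_car.
Proof.
case: (fs_ne S) => s; constructor.
exists (rmult s); apply/orP; left; apply/existsP; exists s; exact: eqxx.
Qed.
Definition bar : finSemigroup := FinSemigroup bar_mulA bar_ne.
End Bar.

Definition bar_pv (V : sgClass) : sgClass :=
  gen (fun T => exists2 S, V S & iso (bar S) T).

(* ---------- implicit operations = elements of the free profinite
   semigroup on a finite alphabet A ---------- *)
Definition rawop (A : finType) := forall T : finSemigroup, (A -> T) -> T.
Definition natural (A : finType) (u : rawop A) :=
  forall (T T' : finSemigroup) (phi : T -> T'), hom phi ->
    forall f : A -> T, phi (u T f) = u T' (fun a => phi (f a)).
Record implop (A : finType) := ImplOp { io : rawop A; io_nat : natural io }.
Arguments io {A} i T f.

Definition rmul (A : finType) (u v : rawop A) : rawop A :=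
  fun T f => fs_mul (u T f) (v T f).

(* power x^(n+1) and the idempotent power x^omega = x^(|T|!) *)
Definition powS (T : finSemigroup) (x : T) (n : nat) : T :=
  iter n (fun y => fs_mul y x) x.
Definition omega (T : finSemigroup) (x : T) : T := powS x (#|T| `!).-1.
Definition romega (A : finType) (u : rawop A) : rawop A :=
  fun T f => omega (u T f).

Definition req (A : finType) (u v : rawop A) := forall T f, u T f = v T f.

(* multiplication in the monoid S^1 (None = empty factor) *)
Definition omul_l (A : finType) (x : option (implop A)) (w : rawop A) : rawop A :=
  match x with Some x => rmul (io x) w | None => w end.
Definition omul_r (A : finType) (w : rawop A) (y : option (implop A)) : rawop A :=
  match y with Some y => rmul w (io y) | None => w end.

Definition idem_implop (A : finType) (e : implop A) := req (rmul (io e) (io e)) (io e).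
(* e lies in the minimal ideal: e belongs to every principal ideal S^1 w S^1 *)
Definition in_minimal_ideal (A : finType) (e : implop A) :=
  forall w : implop A, exists x y : option (implop A),
    req (io e) (omul_r (omul_l x (io w)) y).

Definition sat (A : finType) (u v : rawop A) : sgClass :=
  fun T => forall f : A -> T, u T f = v T f.

(* the term (e z u)^omega over the alphabet A + {z}, with z = None *)
Definition ezu_omega (A : finType) (e : implop (option A)) (u : implop A)
  : rawop (option A) :=
  fun T f => omega (fs_mul (fs_mul (io e T f) (f None)) (io u T (fun a => f (Some a)))).

(* A semigroup is full-constant if it acts faithfully on a set on which it realizes every constant map; [S^bar] is full-constant and contains [S]. For a pseudovariety [X], [S^bar] lies in [X] iff [S] lies in the pseudovariety [fc_gen X] generated by the full-constant members of [X]: [S^bar] is a quotient of [bar1 S], the map [S |-> bar1 S] is compatible with divisions and finite products, and [bar1 W] divides a power of [W] when [W] is full-constant.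
   Conversely, suppose [S^bar] divides a finite product of semigroups [T_k], and fix an idempotent [eps] in the minimal ideal of the subsemigroup involved. Right multiplication on the minimal left ideals [U eps q] is a full-constant divisor of [T_k], and it identifies [w] and [w'] only if [(eps q w)^omega = (eps q w')^omega]. In [S^bar], with [z] evaluated at the constant [1] and the letters at right multiplications, [(e z u)^omega] is the constant [1.u]. Hence [S] is separated by full-constant divisors of the [T_k], which gives join irreducibility. Likewise, if [T] fails [(e z u)^omega = (e z v)^omega], the full-constant divisor built from [T] fails [u = v], so it generates [S] and [S^bar] lies in [[T]]; conversely [S^bar] itself fails this pseudoidentity by the evaluation above. *)

From mathcomp Require Import all_boot zify.
From Stdlib Require Import Classical ClassicalDescription FunctionalExtensionality.
Set Implicit Arguments. Unset Strict Implicit. Unset Printing Implicit Defensive.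

Local Notation "x ⋆ y" := (fs_mul x y) (at level 40, left associativity).

(** * Divisions and pseudovarieties *)

Section Subsemigroup.
Variables (T : finSemigroup) (P : pred T).
Hypothesis mulP : forall x y, P x -> P y -> P (x ⋆ y).
Hypothesis exP : exists x, P x.

Definition sub_mul (x y : {x : T | P x}) : {x : T | P x} :=
  exist _ (val x ⋆ val y) (mulP (valP x) (valP y)).
Lemma sub_mulA : associative sub_mul.
Proof. by move=> x y z; apply: val_inj; rewrite /= fs_assoc. Qed.
Lemma sub_ne : inhabited {x : T | P x}.
Proof. by case: exP => x Px; constructor; exists x. Qed.
Definition sub_sg : finSemigroup := FinSemigroup sub_mulA sub_ne.
End Subsemigroup.

Definition partial_hom (S T : finSemigroup) (F : S -> option T) :=
  forall x y a b, F x = Some a -> F y = Some b -> F (x ⋆ y) = Some (a ⋆ b).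

Definition divides (T S : finSemigroup) :=
  exists F : S -> option T, partial_hom F /\ forall b, exists a, F a = Some b.

Lemma pv_div (V : sgClass) (S T : finSemigroup) :
  pseudovariety V -> V S -> divides T S -> V T.
Proof.
case=> Vquo Vsub _ _ VS [F [homF surjF]]; case: (fs_ne T) => t0.
pose P x := F x != None.
have mulP x y : P x -> P y -> P (x ⋆ y).
  rewrite /P; case ex: (F x) => [a|] // _; case ey: (F y) => [b|] // _.
  by rewrite (homF _ _ _ _ ex ey).
have exP : exists x, P x by case: (surjF t0) => a ea; exists a; rewrite /P ea.
have VZ : V (sub_sg mulP exP).
  by apply: (Vsub S _ (fun x : sub_sg mulP exP => val x)) => //; exact: val_inj.
apply: (Vquo _ _ (fun z : sub_sg mulP exP => odflt t0 (F (val z)))) VZ.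
  move=> [x Px] [y Py] /=; move: Px Py; rewrite /P.
  by case ex: (F x) => [a|] // _; case ey: (F y) => [b|] // _; rewrite (homF _ _ _ _ ex ey).
move=> y; case: (surjF y) => a ea.
have Pa : P a by rewrite /P ea.
by exists (exist _ a Pa); rewrite /= ea.
Qed.

Lemma divides_refl S : divides S S.
Proof. by exists Some; split=> [x y a b [<-] [<-] | b]; [|exists b]. Qed.

Lemma divides_trans A B C : divides A B -> divides B C -> divides A C.
Proof.
case=> [F2 [h2 s2]] [F1 [h1 s1]]; exists (fun c => obind F2 (F1 c)); split.
  move=> x y a b; case e1: (F1 x) => [x'|] //= ea; case e2: (F1 y) => [y'|] //= eb.
  by rewrite (h1 _ _ _ _ e1 e2) /= (h2 _ _ _ _ ea eb).
by move=> a; case: (s2 a) => b eb; case: (s1 b) => c ec; exists c; rewrite ec.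
Qed.

Lemma surj_hom_divides (S T : finSemigroup) (f : S -> T) :
  hom f -> (forall y, exists x, f x = y) -> divides T S.
Proof.
move=> hf sf; exists (fun x => Some (f x)); split; first by move=> x y a b [<-] [<-]; rewrite hf.
by move=> b; case: (sf b) => a <-; exists a.
Qed.

Lemma inj_hom_divides (S T : finSemigroup) (f : T -> S) :
  hom f -> injective f -> divides T S.
Proof.
move=> hf inf; exists (fun s => [pick t | f t == s]); split.
  move=> x y a b; case: pickP => // a' /eqP fa [<-]; case: pickP => // b' /eqP fb [<-].
  case: pickP => [c /eqP fc|/(_ (a' ⋆ b'))]; last by rewrite hf fa fb eqxx.
  by congr Some; apply: inf; rewrite fc hf fa fb.
move=> b; exists (f b); case: pickP => [c /eqP/inf -> //|/(_ b)].
by rewrite eqxx.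
Qed.

Lemma iso_refl A : iso A A.
Proof. by exists id; split => //; exists id. Qed.

Lemma pv_iso (V : sgClass) A B : pseudovariety V -> V A -> iso A B -> V B.
Proof.
move=> pV VA [f [hf [g fg gf]]]; apply: (pv_div pV VA).
by apply: (surj_hom_divides hf) => y; exists (g y).
Qed.

Definition trivial_sg : sgClass := fun S => forall x y : S, x = y.

Lemma trivial_sg_pv : pseudovariety trivial_sg.
Proof.
split.
- move=> S T f hf sf trivS x y.
  by case: (sf x) => a <-; case: (sf y) => b <-; rewrite (trivS a b).
- by move=> S T f hf inf trivS x y; apply: inf.
- by move=> [] [].
- by move=> S T trivS trivT [a b] [c d]; rewrite (trivS a c) (trivT b d).
Qed.

Lemma pv_triv (V : sgClass) (S : finSemigroup) :
  pseudovariety V -> trivial_sg S -> V S.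
Proof.
by case=> _ Vsub Vtriv _ trivS; apply: (Vsub triv_sg S (fun _ => tt)) => // x y _.
Qed.

Lemma divides_prod A1 A2 B1 B2 :
  divides A1 B1 -> divides A2 B2 -> divides (prod_sg A1 A2) (prod_sg B1 B2).
Proof.
case=> [F1 [h1 s1]] [F2 [h2 s2]].
exists (fun x : prod_sg B1 B2 => if (F1 x.1, F2 x.2) is (Some a, Some b)
  then Some ((a, b) : prod_sg A1 A2) else None); split.
  move=> [x1 x2] [y1 y2] [a1 a2] [b1 b2] /=.
  case e1: (F1 x1) => [c1|] //; case e2: (F2 x2) => [c2|] // [<- <-].
  case e3: (F1 y1) => [d1|] //; case e4: (F2 y2) => [d2|] // [<- <-].
  by rewrite (h1 _ _ _ _ e1 e3) (h2 _ _ _ _ e2 e4).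
move=> [b1 b2]; case: (s1 b1) => a1 e1; case: (s2 b2) => a2 e2.
by exists ((a1, a2) : prod_sg B1 B2); rewrite /= e1 e2.
Qed.

Lemma gen_pv K : pseudovariety (gen K).
Proof.
split.
- by move=> S T f hf sf GS V pV KV; case: (pV) => Vquo _ _ _; exact: Vquo hf sf (GS V pV KV).
- by move=> S T f hf inf GS V pV KV; case: (pV) => _ Vsub _ _; exact: Vsub hf inf (GS V pV KV).
- by move=> V [_ _ Vtriv _].
- by move=> S T GS GT V pV KV; case: (pV) => _ _ _ Vprod; exact: Vprod (GS V pV KV) (GT V pV KV).
Qed.

Lemma gen_in (K : sgClass) S : K S -> gen K S.
Proof. by move=> KS V _ KV; apply: KV. Qed.

Lemma gen_min (K V : sgClass) :
  pseudovariety V -> (forall S, K S -> V S) -> forall S, gen K S -> V S.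
Proof. by move=> pV KV S GS; apply: GS. Qed.

Inductive finprod (K : sgClass) : finSemigroup -> Prop :=
| finprod_triv : finprod K triv_sg
| finprod_cons S P : K S -> finprod K P -> finprod K (prod_sg S P).

Lemma finprod_prod K P1 P2 : finprod K P1 -> finprod K P2 ->
  exists2 P, finprod K P & divides (prod_sg P1 P2) P.
Proof.
move=> fP1; elim: fP1 P2 => [|S P KS _ IH] P2 fP2.
  exists P2 => //; exists (fun p : P2 => Some ((tt, p) : prod_sg triv_sg P2)); split.
    by move=> x y a b [<-] [<-].
  by move=> [[] p]; exists p.
case: (IH _ fP2) => P' fP' dP'; exists (prod_sg S P'); first exact: finprod_cons.
apply: divides_trans (divides_prod (divides_refl S) dP').
exists (fun x : prod_sg S (prod_sg P P2) =>
   Some (((x.1, x.2.1), x.2.2) : prod_sg (prod_sg S P) P2)); split.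
  by move=> [x1 [x2 x3]] [y1 [y2 y3]] a b [<-] [<-].
by move=> [[b1 b2] b3]; exists (b1, (b2, b3)).
Qed.

Definition div_finprod (K : sgClass) : sgClass :=
  fun T => exists2 P, finprod K P & divides T P.

Lemma div_finprod_pv K : pseudovariety (div_finprod K).
Proof.
split.
- move=> S T f hf sf [P fP dP]; exists P => //.
  exact: divides_trans (surj_hom_divides hf sf) dP.
- move=> S T f hf inf [P fP dP]; exists P => //.
  exact: divides_trans (inj_hom_divides hf inf) dP.
- by exists triv_sg; [exact: finprod_triv | exact: divides_refl].
- move=> S T [P1 f1 d1] [P2 f2 d2]; case: (finprod_prod f1 f2) => P fP dP.
  by exists P => //; exact: divides_trans (divides_prod d1 d2) dP.
Qed.

Lemma gen_div_finprod K T : gen K T -> div_finprod K T.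
Proof.
apply: gen_min; first exact: div_finprod_pv.
move=> S KS; exists (prod_sg S triv_sg); first exact: finprod_cons (finprod_triv K).
by apply: (@surj_hom_divides _ _ (fun x : prod_sg S triv_sg => x.1)) => // y; exists (y, tt).
Qed.

Lemma finprod_separates K P : finprod K P -> forall x y : P, x <> y ->
  exists (T : finSemigroup) (h : P -> T), [/\ hom h, K T & h x <> h y].
Proof.
elim=> [|S P' KS _ IH] x y; first by case: x; case: y.
case: x y => [x1 x2] [y1 y2].
case: (eqVneq x1 y1) => [-> neq|/eqP neq1 _]; last by exists S, fst.
have [|T [h [hh KT nh]]] := IH x2 y2; first by move=> e2; apply: neq; rewrite e2.
by exists T, (fun p : prod_sg S P' => h p.2); split => // a b; apply: hh.
Qed.

(* Finitely many separating homomorphisms suffice, and [S] is a quotient of the image of [D] in their product. *)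
Lemma pv_separated_quotient (V : sgClass) (D S : finSemigroup) (phi : D -> S) :
  pseudovariety V -> hom phi -> (forall s, exists d, phi d = s) ->
  (forall d d', phi d <> phi d' ->
     exists (W : finSemigroup) (k : D -> W), [/\ hom k, V W & k d <> k d']) ->
  V S.
Proof.
move=> pV hphi sphi sep.
have [W [k [hk VW kl]]] : exists (W : finSemigroup) (k : D -> W), [/\ hom k, V W &
    forall d d', k d = k d' -> phi d = phi d'].
  suff [W [k [hk VW kl]]] : exists (W : finSemigroup) (k : D -> W), [/\ hom k, V W &
      forall p, p \in enum (@predT (D * D)) -> k p.1 = k p.2 -> phi p.1 = phi p.2].
    by exists W, k; split=> // d d' /(kl (d, d')); rewrite mem_enum; apply.
  elim: (enum _) => [|p l [W [k [hk VW kl]]]].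
    by exists triv_sg, (fun _ => tt); split => //; case: pV.
  case: (classic (phi p.1 = phi p.2)) => [E|/sep [W' [k' [hk' VW' nk']]]].
    by exists W, k; split => // q; rewrite inE => /orP [/eqP -> //|]; exact: kl.
  exists (prod_sg W W'), (fun d => (k d, k' d)); split.
  - by move=> a b; rewrite hk hk'.
  - by case: pV => _ _ _ Vprod; apply: Vprod.
  by move=> q; rewrite inE => /orP [/eqP -> [] _ //|ql [] /(kl _ ql)].
apply: (pv_div pV VW); exists (fun w => omap phi [pick d | k d == w]); split.
  move=> x y a b; case: pickP => // d /eqP kd [<-]; case: pickP => // d' /eqP kd' [<-].
  case: pickP => [d'' /eqP kd''|/(_ (d ⋆ d'))]; last by rewrite hk kd kd' eqxx.
  by congr Some; rewrite -hphi; apply: kl; rewrite kd'' hk kd kd'.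
move=> s; case: (sphi s) => d <-; exists (k d).
by case: pickP => [d' /eqP /kl /= -> //|/(_ d)]; rewrite eqxx.
Qed.

(** * Idempotent powers *)

Section Powers.
Variable T : finSemigroup.
Implicit Types x y : T.

Lemma powSS x n : powS x n.+1 = powS x n ⋆ x.
Proof. by []. Qed.

Lemma powSD x m n : powS x (m + n).+1 = powS x m ⋆ powS x n.
Proof.
elim: n => [|n IH]; first by rewrite addn0.
by rewrite addnS powSS IH powSS fs_assoc.
Qed.

Lemma powSl x n : powS x n.+1 = x ⋆ powS x n.
Proof. by rewrite -(add0n n) powSD. Qed.

Lemma powSM x m n : powS (powS x m) n = powS x (m + n * m.+1).
Proof.
elim: n => [|n IH]; first by rewrite mul0n addn0.
by rewrite powSS IH -powSD; congr powS; nia.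
Qed.

Lemma powS_idem x n : x ⋆ x = x -> powS x n = x.
Proof. by move=> xx; elim: n => // n IH; rewrite powSS IH xx. Qed.

Lemma powS_repeat x : exists i j, i < j <= #|T| /\ powS x i = powS x j.
Proof.
apply: NNPP => norep.
have inj : injective (fun i : 'I_#|T|.+1 => powS x i).
  move=> i j e; apply: val_inj; apply: NNPP => /eqP; case: ltngtP => // lt _.
  - by apply: norep; exists i, j; rewrite lt -ltnS ltn_ord.
  - by apply: norep; exists j, i; rewrite lt -ltnS ltn_ord.
by move: (leq_card _ inj); rewrite card_ord ltnn.
Qed.

(* Once the powers of [x] become periodic, with period [p <= #|T|], the exponent [2 * #|T|`!] agrees with [#|T|`!] modulo [p]. *)
Lemma omega_idem x : omega x ⋆ omega x = omega x.
Proof.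
case: (powS_repeat x) => i [j [/andP [ij jn] eij]].
set n := #|T| in jn *; set p := j - i.
have shift m : i <= m -> powS x (m + p) = powS x m.
  move=> im; rewrite -(subnKC im); elim: (m - i) => [|k IH].
    by rewrite addn0 /p (subnKC (ltnW ij)).
  by rewrite addnS [in LHS]addSn powSS IH.
have period m c : i <= m -> powS x (m + c * p) = powS x m.
  move=> im; elim: c => [|c IH]; first by rewrite addn0.
  by rewrite mulSn addnA addnAC shift ?IH // (leq_trans im) ?leq_addr.
have p0 : 0 < p by rewrite subn_gt0.
have pN : p %| n`! by rewrite dvdn_fact // p0 (leq_trans (leq_subr _ _) jn).
have nN : n <= n`!.
  by rewrite dvdn_leq ?fact_gt0 // dvdn_fact // leqnn (leq_ltn_trans _ (leq_trans ij jn)).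
rewrite /omega -/n -powSD.
have -> : ((n`!).-1 + (n`!).-1).+1 = (n`!).-1 + (n`! %/ p) * p.
  by rewrite divnK //; have := fact_gt0 n; lia.
by rewrite period //; have := fact_gt0 n; lia.
Qed.

Lemma omega_uniq x n : powS x n ⋆ powS x n = powS x n -> omega x = powS x n.
Proof.
move=> idn; have ido := omega_idem x; rewrite /omega in ido *.
by rewrite -(powS_idem n ido) -(powS_idem (#|T|`!).-1 idn) !powSM; congr powS; nia.
Qed.

Lemma omega_id x : x ⋆ x = x -> omega x = x.
Proof. exact: powS_idem. Qed.

End Powers.

Lemma hom_powS (S T : finSemigroup) (f : S -> T) x n : hom f -> f (powS x n) = powS (f x) n.
Proof. by move=> hf; elim: n => // n IH; rewrite !powSS hf IH. Qed.

Lemma hom_omega (S T : finSemigroup) (f : S -> T) x : hom f -> f (omega x) = omega (f x).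
Proof.
move=> hf; rewrite [in LHS]/omega hom_powS //; symmetry; apply: omega_uniq.
by rewrite -hom_powS // -hf omega_idem.
Qed.

Lemma partial_hom_omega (S T : finSemigroup) (F : S -> option T) x a :
  partial_hom F -> F x = Some a -> a ⋆ a = a -> F (omega x) = Some a.
Proof.
move=> hF Fx aa; rewrite /omega -(powS_idem (#|S|`!).-1 aa).
by elim: (_.-1) => // n IH; rewrite !powSS (hF _ _ _ _ IH Fx).
Qed.

(** * Transformation semigroups *)

Section TransformationSemigroup.
Variable Y : finType.
Implicit Types f g : {ffun Y -> Y}.

Definition tmul f g : {ffun Y -> Y} := [ffun y => g (f y)].
Lemma tmulA : associative tmul.
Proof. by move=> f g h; apply/ffunP => y; rewrite !ffunE. Qed.
Definition trans_sg : finSemigroup := FinSemigroup tmulA (inhabits [ffun y => y]).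

Definition cfun (y : Y) : {ffun Y -> Y} := [ffun => y].
Lemma tmul_cfun f y : tmul f (cfun y) = cfun y.
Proof. by apply/ffunP => z; rewrite !ffunE. Qed.
Lemma cfun_tmul f y : tmul (cfun y) f = cfun (f y).
Proof. by apply/ffunP => z; rewrite !ffunE. Qed.
End TransformationSemigroup.

Section InducedDivision.
Variables (B B' : finSemigroup) (Y Y' : finType).
Variables (ev : B -> {ffun Y -> Y}) (ev' : B' -> {ffun Y' -> Y'}).
Hypothesis ev_hom : forall x y, ev (x ⋆ y) = tmul (ev x) (ev y).
Hypothesis ev'_hom : forall x y, ev' (x ⋆ y) = tmul (ev' x) (ev' y).
Hypothesis ev'_inj : injective ev'.
Variable pi : Y -> option Y'.
Hypothesis pi_surj : forall y', exists y, pi y = Some y'.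
Implicit Types (f h : {ffun Y -> Y}) (g k : {ffun Y' -> Y'}).

Definition covers f g : bool :=
  [forall y, forall z, (pi y == Some z) ==> (pi (f y) == Some (g z))].

Lemma coversP f g :
  reflect (forall y z, pi y = Some z -> pi (f y) = Some (g z)) (covers f g).
Proof.
apply: (iffP forallP) => [cov y z /eqP piy|cov y].
  by move/forallP/(_ z)/implyP: (cov y) => /(_ piy)/eqP.
by apply/forallP => z; apply/implyP => /eqP/cov ->.
Qed.

Lemma covers_tmul f h g k : covers f g -> covers h k -> covers (tmul f h) (tmul g k).
Proof.
move=> /coversP cov /coversP cov'; apply/coversP => y z /cov /cov'.
by rewrite !ffunE.
Qed.

Lemma covers_uniq f g k : covers f g -> covers f k -> g = k.
Proof.
move=> /coversP cov /coversP cov'; apply/ffunP => z; case: (pi_surj z) => y piy.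
by move: (cov _ _ piy); rewrite (cov' _ _ piy) => -[].
Qed.

Lemma induced_divides : (forall b', exists b, covers (ev b) (ev' b')) -> divides B' B.
Proof.
move=> cov; exists (fun b => [pick b' | covers (ev b) (ev' b')]); split.
  move=> x y a b; case: pickP => // a' ca [<-]; case: pickP => // b' cb [<-].
  have cab : covers (ev (x ⋆ y)) (ev' (a' ⋆ b')).
    by rewrite ev_hom ev'_hom covers_tmul.
  case: pickP => [c cc|/(_ (a' ⋆ b'))]; last by rewrite cab.
  by congr Some; apply: ev'_inj; exact: covers_uniq cc cab.
move=> b'; case: (cov b') => b cb; exists b.
case: pickP => [c cc|/(_ b')]; last by rewrite cb.
by congr Some; apply: ev'_inj; exact: covers_uniq cc cb.
Qed.
End InducedDivision.

(** * The semigroups [S^bar] *)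

(* [bar1 S] is [S^bar] computed on [S^I] even when [S] is a monoid: it avoids the case distinction in the definition of [S^bar], which it maps onto. *)
Section Bar1.
Variable S : finSemigroup.

Definition act1 (o : option S) (s : S) : S := if o is Some a then a ⋆ s else s.
Definition rmul1 (s : S) : {ffun option S -> option S} := [ffun o => Some (act1 o s)].
Definition in_bar1 (f : {ffun option S -> option S}) : bool :=
  [exists s, f == rmul1 s] || [exists p, f == cfun p].

Lemma rmul1_in s : in_bar1 (rmul1 s).
Proof. by apply/orP; left; apply/existsP; exists s. Qed.
Lemma cfun_in p : in_bar1 (cfun p).
Proof. by apply/orP; right; apply/existsP; exists p. Qed.

Lemma tmul_rmul1 s t : tmul (rmul1 s) (rmul1 t) = rmul1 (s ⋆ t).
Proof. by apply/ffunP => -[a|]; rewrite !ffunE //= fs_assoc. Qed.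

Lemma in_bar1_tmul f g : in_bar1 f -> in_bar1 g -> in_bar1 (tmul f g).
Proof.
case/orP=> /existsP [s /eqP ->]; case/orP=> /existsP [t /eqP ->];
by rewrite ?tmul_rmul1 ?tmul_cfun ?cfun_tmul ?rmul1_in ?cfun_in.
Qed.

Definition bar1 : finSemigroup :=
  sub_sg (T := trans_sg (option S)) in_bar1_tmul (ex_intro in_bar1 _ (cfun_in None)).
Definition bar1_rmul s : bar1 := exist _ (rmul1 s) (rmul1_in s).
Definition bar1_cst p : bar1 := exist _ (cfun p) (cfun_in p).

Lemma bar1P (x : bar1) : (exists s, val x = rmul1 s) \/ (exists p, val x = cfun p).
Proof. by case/orP: (valP x) => /existsP [s /eqP ->]; [left|right]; exists s. Qed.
End Bar1.

Definition is_id (S : finSemigroup) (s : S) := forall x, s ⋆ x = x /\ x ⋆ s = x.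

Lemma Sdot_unit (S : finSemigroup) : exists i : Sdot S,
  [/\ forall a, a = i \/ exists s, a = act i s, injective (act i)
    & forall s, is_id s -> act i s = i].
Proof.
rewrite /Sdot /act; case hb: (is_monoid S).
- have /existsP [e /forallP ide] : is_monoid S by [].
  have {}ide x : e ⋆ x = x /\ x ⋆ e = x by case/andP: (ide x) => /eqP -> /eqP ->.
  exists e; split => /= [a|s t|s ids].
  + by right; exists a; rewrite (proj1 (ide a)).
  + by rewrite (proj1 (ide s)) (proj1 (ide t)).
  + by rewrite (proj1 (ide s)) -[RHS](proj1 (ids e)) (proj2 (ide s)).
- exists None; split => /= [[a|]|s t [] //|s ids]; [by right; exists a|by left|].
  suff : is_monoid S by rewrite hb.
  by apply/existsP; exists s; apply/forallP => x; case: (ids x) => -> ->; rewrite !eqxx.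
Qed.

Section BarElements.
Variable S : finSemigroup.

Lemma in_bar_rmult (s : S) : in_bar (rmult s).
Proof. by apply/orP; left; apply/existsP; exists s. Qed.
Lemma in_bar_cst (a : Sdot S) : in_bar (cst a).
Proof. by apply/orP; right; apply/existsP; exists a. Qed.

Definition bar_rmul (s : S) : bar S := exist _ (rmult s) (in_bar_rmult s).
Definition bar_cst (a : Sdot S) : bar S := exist _ (cst a) (in_bar_cst a).

Lemma bar_rmul_hom : hom bar_rmul.
Proof. by move=> s t; apply: val_inj; apply/ffunP => a; rewrite /= !ffunE /act act_bA. Qed.

Lemma bar_rmul_inj : injective bar_rmul.
Proof.
case: (Sdot_unit S) => i [_ inj _] s t [] /ffunP /(_ i).
by rewrite !ffunE => /inj.
Qed.

Lemma bar_cstl (x : bar S) a : x ⋆ bar_cst a = bar_cst a.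
Proof. by apply: val_inj; apply/ffunP => b; rewrite /= !ffunE. Qed.

Lemma bar_cst_rmul a s : bar_cst a ⋆ bar_rmul s = bar_cst (act a s).
Proof. by apply: val_inj; apply/ffunP => b; rewrite /= !ffunE. Qed.

Lemma bar_of_bar1 : divides (bar S) (bar1 S).
Proof.
case: (Sdot_unit S) => i [sur _ _].
pose iota o := if o is Some s then act i s else i.
have pi_surj a : exists o, Some (iota o) = Some a.
  by case: (sur a) => [->|[s ->]]; [exists None | exists (Some s)].
apply: (@induced_divides (bar1 S) (bar S) _ _ val val _ _ val_inj _ pi_surj) => // x.
case/orP: (valP x) => [/existsP [s /eqP ->]|/existsP [a /eqP ->]].
  by exists (bar1_rmul s); apply/coversP => -[b|] _ [<-]; rewrite !ffunE //= /act act_bA.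
case: (sur a) => [->|[t ->]]; [exists (bar1_cst (None : option S)) | exists (bar1_cst (Some t))];
  by apply/coversP => o _ [<-]; rewrite !ffunE.
Qed.

Lemma bar_triv : trivial_sg S -> trivial_sg (bar S).
Proof.
move=> trivS; case: (Sdot_unit S) => i [sur _ idc].
have one a : a = i.
  by case: (sur a) => [//|[s ->]]; apply: idc => x; split; apply: trivS.
by move=> x y; apply: val_inj; apply/ffunP => a; rewrite (one (val x a)) (one (val y a)).
Qed.
End BarElements.

Lemma bar1_quot (S T : finSemigroup) (phi : S -> T) :
  hom phi -> (forall y, exists x, phi x = y) -> divides (bar1 T) (bar1 S).
Proof.
move=> hphi sphi.
have pi_surj (a : option T) : exists o, Some (omap phi o) = Some a.
  by case: a => [a|]; [case: (sphi a) => s <-; exists (Some s) | exists None].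
apply: (@induced_divides (bar1 S) (bar1 T) _ _ val val _ _ val_inj _ pi_surj) => // x.
case: (bar1P x) => [[t ->]|[a ->]].
- case: (sphi t) => s <-; exists (bar1_rmul s).
  by apply/coversP => -[b|] _ [<-]; rewrite !ffunE //= hphi.
- case: (pi_surj a) => o [<-]; exists (bar1_cst o).
  by apply/coversP => o' _ [<-]; rewrite !ffunE.
Qed.

Lemma bar1_sub (S T : finSemigroup) (f : T -> S) :
  hom f -> injective f -> divides (bar1 T) (bar1 S).
Proof.
move=> hf inf.
pose pi (o : option S) : option (option T) :=
  if o is Some s then omap Some [pick t | f t == s] else Some None.
have piS t : pi (Some (f t)) = Some (Some t).
  by rewrite /pi; case: pickP => [t' /eqP /inf -> //|/(_ t)]; rewrite eqxx.
have pi_surj a : exists o, pi o = Some a.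
  by case: a => [t|]; [exists (Some (f t)) | exists None].
have piE o z : pi o = Some z -> o = omap f z.
  by case: o z => [s|] [z|] //=; case: pickP => // t /eqP <- [<-].
have piN : pi None = Some None by [].
clearbody pi.
apply: (@induced_divides (bar1 S) (bar1 T) _ _ val val _ _ val_inj _ pi_surj) => // x.
case: (bar1P x) => [[t ->]|[a ->]].
- exists (bar1_rmul (f t)); apply/coversP => o z /piE ->.
  by rewrite !ffunE; case: z => [b|] /=; rewrite -?hf ?piS.
- exists (bar1_cst (omap f a)); apply/coversP => o z _.
  by rewrite !ffunE; case: a => [b|] /=; rewrite ?piS.
Qed.

Lemma bar1_prod (S T : finSemigroup) :
  divides (bar1 (prod_sg S T)) (prod_sg (bar1 S) (bar1 T)).
Proof.
pose ev (x : prod_sg (bar1 S) (bar1 T)) :=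
  [ffun y : option S * option T => (val x.1 y.1, val x.2 y.2)].
pose pi (y : option S * option T) : option (option (prod_sg S T)) :=
  match y with
  | (None, None) => Some None
  | (Some a, Some b) => Some (Some (a, b))
  | _ => None end.
have pi_surj a : exists y, pi y = Some a.
  by case: a => [[a b]|]; [exists (Some a, Some b) | exists (None, None)].
have piE y z : pi y = Some z ->
    y = if z is Some (a, b) then (Some a, Some b) else (None, None).
  by case: y z => [[a|] [b|]] [[c d]|] //= [-> ->].
apply: (@induced_divides _ (bar1 (prod_sg S T)) _ _ ev val _ _ val_inj _ pi_surj) => //.
  by move=> x y; apply/ffunP => z; rewrite !ffunE.
move=> x; case: (bar1P x) => [[[s t] ->]|[a ->]].
- exists ((bar1_rmul s, bar1_rmul t) : prod_sg (bar1 S) (bar1 T)).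
  by apply/coversP => y z /piE ->; rewrite !ffunE; case: z => [[a b]|].
- exists ((bar1_cst (omap fst a), bar1_cst (omap snd a)) : prod_sg (bar1 S) (bar1 T)).
  by apply/coversP => y z _; rewrite !ffunE; case: a => [[p q]|].
Qed.

Definition right_zero2 : finSemigroup :=
  @FinSemigroup bool (fun _ y => y) (fun _ _ _ => erefl) (inhabits true).

Lemma bar1_triv (S : finSemigroup) : trivial_sg S -> divides (bar1 S) right_zero2.
Proof.
move=> trivS; case: (fs_ne S) => s0.
pose F (b : right_zero2) := bar1_cst (if b then Some s0 else None).
exists (fun b => Some (F b)); split.
  by move=> x y a b [<-] [<-]; congr Some; apply: val_inj; rewrite /= tmul_cfun.
move=> x; case: (bar1P x) => [[s ex]|[p ex]].
- exists true; congr Some; apply: val_inj; rewrite /= ex; apply/ffunP => o.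
  by rewrite !ffunE (trivS (act1 o s) s0).
- exists (p != None); congr Some; apply: val_inj; rewrite /= ex.
  by case: p {ex} => [p|] //=; rewrite (trivS p s0).
Qed.

Lemma bar1_pv (X : sgClass) : pseudovariety X -> X right_zero2 ->
  pseudovariety (fun S => X (bar1 S)).
Proof.
move=> pX XR; split.
- by move=> S T f hf sf XS; apply: (pv_div pX XS); exact: bar1_quot hf sf.
- by move=> S T f hf inf XS; apply: (pv_div pX XS); exact: bar1_sub hf inf.
- by apply: (pv_div pX XR); apply: bar1_triv => -[] [].
- move=> S T XS XT; apply: (pv_div pX _ (bar1_prod S T)).
  by case: pX => _ _ _ Xprod; apply: Xprod.
Qed.

(** * Full-constant semigroups *)

Definition fullconst (W : finSemigroup) : Prop :=
  exists (Y : finType) (ev : W -> {ffun Y -> Y}),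
    [/\ injective ev, forall x y, ev (x ⋆ y) = tmul (ev x) (ev y)
      & forall y, exists w, ev w = cfun y].

Definition fc_gen (X : sgClass) : sgClass := gen (fun W => fullconst W /\ X W).

Section Power.
Variables (I : finType) (W : finSemigroup).
Definition pow_mul (f g : {ffun I -> W}) : {ffun I -> W} := [ffun i => f i ⋆ g i].
Lemma pow_mulA : associative pow_mul.
Proof. by move=> f g h; apply/ffunP => i; rewrite !ffunE fs_assoc. Qed.
Lemma pow_ne : inhabited {ffun I -> W}.
Proof. by case: (fs_ne W) => w; constructor; exact: [ffun => w]. Qed.
Definition pow_sg : finSemigroup := FinSemigroup pow_mulA pow_ne.
End Power.

Lemma pow_sg_pv (V : sgClass) I W : pseudovariety V -> V W -> V (pow_sg I W).
Proof.
move=> pV VW; apply: (@pv_separated_quotient _ _ _ id) => // [s|f g ne]; first by exists s.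
have [i ni] : exists i, f i <> g i.
  by apply: NNPP => eqfg; apply/ne/ffunP => i; apply: NNPP => ni; apply: eqfg; exists i.
by exists W, (fun h : pow_sg I W => h i); split => // x y; rewrite /fs_mul /= ffunE.
Qed.

Section FullConst.
Variables (W : finSemigroup) (Y : finType) (ev : W -> {ffun Y -> Y}).
Hypotheses (ev_inj : injective ev) (ev_hom : forall x y, ev (x ⋆ y) = tmul (ev x) (ev y)).
Hypothesis ev_const : forall y, exists w, ev w = cfun y.

Let ev_constb y : exists w, ev w == cfun y.
Proof. by case: (ev_const y) => w /eqP; exists w. Qed.

Definition const_elt y : W := xchoose (ev_constb y).

Lemma const_eltE y : ev (const_elt y) = cfun y.
Proof. exact/eqP/(xchooseP (ev_constb y)). Qed.

Lemma const_elt_inj : injective const_elt.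
Proof.
by move=> y y' e; move: (const_eltE y); rewrite e const_eltE => /ffunP /(_ y); rewrite !ffunE.
Qed.

Lemma const_elt_mul y w : const_elt y ⋆ w = const_elt (ev w y).
Proof. by apply: ev_inj; rewrite ev_hom !const_eltE cfun_tmul. Qed.

Lemma mul_const_elt w y : w ⋆ const_elt y = const_elt y.
Proof. by apply: ev_inj; rewrite ev_hom !const_eltE tmul_cfun. Qed.

Variables y1 y2 : Y.
Hypothesis y12 : y1 != y2.

(* [W^I] is represented by tuples of constants of [W], on which both the right multiplications and the constant maps of [bar1 W] become right multiplications in a power of [W]; the coordinate [None] tells [I] apart from the elements of [W]. *)
Definition enc (p : option W) : pow_sg (option Y) W :=
  [ffun i => if i is Some y then const_elt (if p is Some w then ev w y else y)
             else const_elt (if p is Some _ then y2 else y1)].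

Lemma enc_inj : injective enc.
Proof.
move=> p q e.
have eN := congr1 (fun f : {ffun _ -> _} => f None) e; rewrite /= !ffunE in eN.
have eS y := congr1 (fun f : {ffun _ -> _} => f (Some y)) e; rewrite /= in eS.
case: p q e eN eS => [a|] [b|] _ /const_elt_inj eN eS //;
  try by move: y12; rewrite eN eqxx.
congr Some; apply: ev_inj; apply/ffunP => y.
by move: (eS y); rewrite !ffunE => /const_elt_inj.
Qed.

Definition diag_elt (w : W) : pow_sg (option Y) W :=
  [ffun i => if i is Some _ then w else const_elt y2].

Lemma enc_diag p w : enc p ⋆ diag_elt w = enc (Some (act1 p w)).
Proof.
apply/ffunP => -[y|]; rewrite /fs_mul /= !ffunE ?mul_const_elt // const_elt_mul.
by case: p => [a|] //=; rewrite ev_hom ffunE.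
Qed.

Lemma mul_enc (x : pow_sg (option Y) W) p : x ⋆ enc p = enc p.
Proof. by apply/ffunP => i; rewrite /fs_mul /= !ffunE; case: i => *; rewrite mul_const_elt. Qed.

Lemma bar1_div_pow : divides (bar1 W) (pow_sg (option Y) W).
Proof.
pose evB (b : pow_sg (option Y) W) := [ffun x : pow_sg (option Y) W => x ⋆ b].
pose pi (x : pow_sg (option Y) W) := [pick p | enc p == x].
have piE p : pi (enc p) = Some p.
  by rewrite /pi; case: pickP => [q /eqP /enc_inj -> //|/(_ p)]; rewrite eqxx.
have piS x z : pi x = Some z -> x = enc z.
  by rewrite /pi; case: pickP => // q /eqP <- [<-].
have pi_surj a : exists x, pi x = Some a by exists (enc a).
apply: (@induced_divides _ (bar1 W) _ _ evB val _ _ val_inj _ pi_surj) => //.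
  by move=> x y; apply/ffunP => z; rewrite !ffunE fs_assoc.
move=> x; case: (bar1P x) => [[w ->]|[a ->]].
- by exists (diag_elt w); apply/coversP => y z /piS ->; rewrite !ffunE enc_diag piE.
- by exists (enc a); apply/coversP => y z _; rewrite !ffunE mul_enc piE.
Qed.

Lemma right_zero2_div : divides right_zero2 W.
Proof.
have c21 : (cfun y2 == cfun y1) = false.
  by apply/negbTE; apply: contra y12 => /eqP /ffunP /(_ y1); rewrite !ffunE => ->.
exists (fun w => if ev w == cfun y1 then Some false
                 else if ev w == cfun y2 then Some true else None); split.
  move=> x y a b _; rewrite ev_hom.
  case: (eqVneq (ev y) (cfun y1)) => [->|_]; first by rewrite tmul_cfun eqxx => -[<-].
  case: (eqVneq (ev y) (cfun y2)) => [->|_ //].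
  by rewrite tmul_cfun c21 eqxx => -[<-].
case; [exists (const_elt y2) | exists (const_elt y1)]; by rewrite const_eltE ?c21 eqxx.
Qed.
End FullConst.

Lemma faithful_trivial (W : finSemigroup) (Y : finType) (ev : W -> {ffun Y -> Y}) :
  injective ev -> (forall a b : Y, a = b) -> trivial_sg W.
Proof. by move=> ev_inj single x y; apply: ev_inj; apply/ffunP => a; apply: single. Qed.

Lemma bar1_fc_gen (X : sgClass) S :
  pseudovariety X -> X right_zero2 -> fc_gen X S -> X (bar1 S).
Proof.
move=> pX XR; move: S; apply: (gen_min (bar1_pv pX XR)).
move=> W [[Y [ev [ev_inj ev_hom ev_const]]] XW].
case: (classic (exists y1 y2 : Y, y1 != y2)) => [[y1 [y2 y12]]|single].
  exact: pv_div pX (pow_sg_pv _ pX XW) (bar1_div_pow ev_inj ev_hom ev_const y12).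
apply: (pv_div pX XR); apply: bar1_triv; apply: (faithful_trivial ev_inj) => a b.
by apply: NNPP => ne; apply: single; exists a, b; apply/eqP.
Qed.

Lemma fc_gen_triv (X : sgClass) S :
  pseudovariety X -> ~ X right_zero2 -> fc_gen X S -> trivial_sg S.
Proof.
move=> pX nXR; move: S; apply: (gen_min trivial_sg_pv).
move=> W [[Y [ev [ev_inj ev_hom ev_const]]] XW].
apply: (faithful_trivial ev_inj) => a b; apply: NNPP => ab; apply: nXR.
exact: pv_div pX XW (right_zero2_div ev_hom ev_const (introN eqP ab)).
Qed.

(* [bar1 W] divides a power of [W] for every full-constant [W] with two points, and if [X] misses [right_zero2] its full-constant members are trivial. *)
Lemma bar_fc_gen (X : sgClass) S : pseudovariety X -> fc_gen X S -> X (bar S).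
Proof.
move=> pX GS; case: (classic (X right_zero2)) => [XR|nXR].
  exact: pv_div pX (bar1_fc_gen pX XR GS) (bar_of_bar1 S).
by apply: (pv_triv pX); apply: bar_triv; exact: fc_gen_triv pX nXR GS.
Qed.

Lemma fullconst_bar S : fullconst (bar S).
Proof. by exists (Sdot S), val; split=> // [|a]; [exact: val_inj | exists (bar_cst a)]. Qed.

Lemma fc_gen_of_bar (X : sgClass) S : X (bar S) -> fc_gen X S.
Proof.
move=> XbS; have [_ Gsub _ _] := gen_pv (fun W => fullconst W /\ X W).
apply: (Gsub _ _ _ (@bar_rmul_hom S) (@bar_rmul_inj S)).
by apply: gen_in; split=> //; exact: fullconst_bar.
Qed.

Lemma bar_pv_sub (V X : sgClass) :
  pseudovariety X -> subclass V (fc_gen X) -> subclass (bar_pv V) X.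
Proof.
move=> pX VX; apply: (gen_min pX) => T [S VS iST].
exact: pv_iso pX (bar_fc_gen pX (VX S VS)) iST.
Qed.

(** * Idempotents of the minimal ideal *)

Section MinimalIdempotent.
Variable T : finSemigroup.
Implicit Types U : {set T}.

Definition mul_closed U := forall x y, x \in U -> y \in U -> x ⋆ y \in U.

Definition min_idempotent U (eps : T) :=
  [/\ eps \in U, eps ⋆ eps = eps &
      forall w, w \in U -> exists x y, [/\ x \in U, y \in U & eps = x ⋆ w ⋆ y]].

Fixpoint seq_prod (x : T) (l : seq T) : T :=
  if l is y :: l' then x ⋆ seq_prod y l' else x.

Lemma seq_prod_in U x l :
  mul_closed U -> x \in U -> all (mem U) l -> seq_prod x l \in U.
Proof. by move=> UM; elim: l x => //= y l IH x xU /andP [yU lU]; rewrite UM ?IH. Qed.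

Lemma seq_prod_factor U x l e f w :
  mul_closed U -> x \in U -> all (mem U) l -> e \in U -> f \in U -> w \in x :: l ->
  exists a b, [/\ a \in U, b \in U & e ⋆ seq_prod x l ⋆ f = a ⋆ w ⋆ b].
Proof.
move=> UM; elim: l x e => [|y l IH] x e xU /=; first by move=> _ eU fU /[!inE] /eqP ->; exists e, f.
move=> /andP [yU lU] eU fU; rewrite inE => /predU1P [->|wl].
  by exists e, (seq_prod y l ⋆ f); rewrite eU UM ?seq_prod_in ?fs_assoc.
have [a [b [aU bU E]]] := IH y (e ⋆ x) yU lU (UM _ _ eU xU) fU wl.
by exists a, b; rewrite fs_assoc E.
Qed.

(* The idempotent power of the product of all elements of [U] is a factor of every element of [U]. *)
Lemma exists_min_idempotent U x0 :
  mul_closed U -> x0 \in U -> exists eps, min_idempotent U eps.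
Proof.
move=> UM x0U; have allU : all (mem U) (enum U) by apply/allP => y; rewrite mem_enum.
set z0 := seq_prod x0 (enum U); set eps := omega z0.
have z0U : z0 \in U by exact: seq_prod_in.
have powU n : powS z0 n \in U by elim: n => // n IH; rewrite powSS UM.
have epsE : eps = powS z0 ((#|T|`!).-1 + (#|T|`!).-1) ⋆ z0 ⋆ eps.
  by rewrite -powSS powSD -/(omega z0) !omega_idem.
have epsU : eps \in U := powU _.
exists eps; split=> //; first exact: omega_idem.
move=> w wU; rewrite epsE; apply: seq_prod_factor => //.
by rewrite inE mem_enum wU orbT.
Qed.

Variables (U : {set T}) (eps : T).
Hypotheses (UM : mul_closed U) (epsU : eps \in U) (epsI : eps ⋆ eps = eps).
Hypothesis eps_min : forall w, w \in U -> exists x y, [/\ x \in U, y \in U & eps = x ⋆ w ⋆ y].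

Local Notation N := (#|T|`!).-1.

Lemma powS_in x n : x \in U -> powS x n \in U.
Proof. by move=> xU; elim: n => // n IH; rewrite powSS UM. Qed.

Lemma eps_powSl x n : eps ⋆ x = x -> eps ⋆ powS x n = powS x n.
Proof. by move=> ex; elim: n => // n IH; rewrite powSS fs_assoc IH. Qed.

Lemma eps_powSr x n : x ⋆ eps = x -> powS x n ⋆ eps = powS x n.
Proof. by move=> xe; elim: n => // n IH; rewrite powSl -fs_assoc IH. Qed.

Lemma omega_powS2 (x : T) : omega x = powS x (N + N).+1.
Proof. by rewrite powSD -/(omega x) omega_idem. Qed.

(* [eps U eps] is a group with identity [eps]: every [eps q eps] has a left inverse. *)
Lemma eps_left_inverse q : q \in U -> exists2 g, g \in U & eps = g ⋆ (eps ⋆ q ⋆ eps).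
Proof.
move=> qU; set h := eps ⋆ q ⋆ eps.
have he : h ⋆ eps = h by rewrite /h -fs_assoc epsI.
have [x [y [xU yU exy]]] := eps_min (UM (UM epsU qU) epsU).
set s := eps ⋆ x ⋆ h; set r := y ⋆ eps.
have sr : s ⋆ r = eps.
  rewrite /s /r; transitivity (eps ⋆ (x ⋆ h ⋆ y) ⋆ eps); first by rewrite !fs_assoc.
  by rewrite -exy !epsI.
have pow_sr n : powS s n ⋆ powS r n = eps.
  elim: n => // n IH; rewrite powSS powSl.
  by rewrite -fs_assoc (fs_assoc s) sr fs_assoc eps_powSr // /s -fs_assoc he.
have se : omega s = eps.
  have fe : omega s ⋆ eps = omega s by rewrite eps_powSr // /s -fs_assoc he.
  by rewrite -fe -(pow_sr N) fs_assoc -/(omega s) omega_idem.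
exists (powS s (N + N) ⋆ (eps ⋆ x)); first by rewrite UM ?powS_in ?UM.
by rewrite -fs_assoc -/s -powSS -omega_powS2 se.
Qed.

Lemma omega_eps k : k \in U -> eps ⋆ k = k -> k ⋆ eps = k -> omega k = eps.
Proof.
move=> kU ek ke; set f := omega k.
have ef : eps ⋆ f = f by rewrite /f /omega eps_powSl.
have fe : f ⋆ eps = f by rewrite /f /omega eps_powSr.
have [g gU eg] := eps_left_inverse (powS_in (#|T|`!).-1 kU : f \in U).
rewrite ef fe in eg.
by rewrite -ef eg -fs_assoc omega_idem -eg.
Qed.

Lemma powS_eps_sandwich c m : eps ⋆ c = c -> powS c m.+1 = powS (c ⋆ eps) m ⋆ c.
Proof.
move=> ec; elim: m => [|m IH]; first by rewrite powSS /= -fs_assoc ec.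
by rewrite powSS IH powSS -!fs_assoc ec.
Qed.

(* [a] and [b] lie in the same H-class of the minimal ideal (the R-class of [eps] and a common L-class), so they share their idempotent power: both are [k^-1 a] in the group [eps U eps], with [k = a eps]. *)
Lemma omega_eq_H a b y : a \in U -> y \in U -> eps ⋆ a = a -> eps ⋆ b = b ->
  b = y ⋆ a -> omega a = omega b.
Proof.
move=> aU yU ea eb bya.
set k := a ⋆ eps; set h := eps ⋆ y ⋆ eps; set M := N + N.
have kU : k \in U by rewrite UM.
have ek : eps ⋆ k = k by rewrite /k fs_assoc ea.
have ke : k ⋆ eps = k by rewrite /k -fs_assoc epsI.
have he : h ⋆ eps = h by rewrite /h -fs_assoc epsI.
have hkU : h ⋆ k \in U by rewrite !UM.
have ehk : eps ⋆ (h ⋆ k) = h ⋆ k by rewrite /h !fs_assoc epsI.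
have hke : h ⋆ k ⋆ eps = h ⋆ k by rewrite -fs_assoc ke.
have inv_k : k ⋆ powS k M = eps by rewrite -powSl -omega_powS2 omega_eps.
have inv_hk : powS (h ⋆ k) M ⋆ h ⋆ k = eps.
  by rewrite -fs_assoc -powSS -omega_powS2 omega_eps.
have hk_inv : powS (h ⋆ k) M ⋆ h = powS k M.
  transitivity (powS (h ⋆ k) M ⋆ h ⋆ (k ⋆ powS k M)); first by rewrite inv_k -fs_assoc he.
  by rewrite fs_assoc inv_hk eps_powSl.
have bha : b = h ⋆ a by rewrite -eb bya -{1}ea /h !fs_assoc.
have bek : b ⋆ eps = h ⋆ k by rewrite bha /k fs_assoc.
rewrite !omega_powS2 -/M (powS_eps_sandwich _ ea) (powS_eps_sandwich _ eb) bek.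
by rewrite bha fs_assoc hk_inv.
Qed.

Definition lideal (y : T) : {set T} := [set x ⋆ y | x in U].
Definition rtrans (A : {set T}) (w : T) : {set T} := [set a ⋆ w | a in A].

Lemma rtrans_lideal y w : rtrans (lideal y) w = lideal (y ⋆ w).
Proof.
apply/setP => z; apply/imsetP/imsetP => [[a /imsetP [x xU ->] ->]|[x xU ->]].
  by exists x; rewrite ?fs_assoc.
by exists (x ⋆ y); [apply/imsetP; exists x | rewrite fs_assoc].
Qed.

Lemma rtrans_mul A w w' : rtrans (rtrans A w) w' = rtrans A (w ⋆ w').
Proof.
apply/setP => z; apply/imsetP/imsetP => [[a /imsetP [x xA ->] ->]|[x xA ->]].
  by exists x; rewrite ?fs_assoc.
by exists (x ⋆ w); [apply/imsetP; exists x | rewrite fs_assoc].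
Qed.

Lemma lideal_eps_const q q' :
  q \in U -> q' \in U -> lideal (eps ⋆ q' ⋆ (eps ⋆ q)) = lideal (eps ⋆ q).
Proof.
move=> qU q'U; have [g gU eg] := eps_left_inverse q'U.
apply/setP => z; apply/imsetP/imsetP => [[x xU ->]|[x xU ->]].
  by exists (x ⋆ (eps ⋆ q')); rewrite ?UM // !fs_assoc.
by exists (x ⋆ g); rewrite ?UM // {1}eg !fs_assoc.
Qed.

Definition is_min_lideal (A : {set T}) : bool := [exists q in U, A == lideal (eps ⋆ q)].
Definition min_lideal : finType := {A : {set T} | is_min_lideal A}.

Lemma is_min_lideal_rtrans (A : min_lideal) w : w \in U -> is_min_lideal (rtrans (val A) w).
Proof.
move=> wU; case/existsP: (valP A) => q /andP [qU /eqP ->].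
by apply/existsP; exists (q ⋆ w); rewrite UM //= rtrans_lideal fs_assoc eqxx.
Qed.

Definition ract (w : T) : {ffun min_lideal -> min_lideal} :=
  [ffun A => insubd A (rtrans (val A) w)].

Lemma ractE w A : w \in U -> val (ract w A) = rtrans (val A) w.
Proof. by move=> wU; rewrite ffunE val_insubd is_min_lideal_rtrans. Qed.

Lemma tmul_ract w w' : w \in U -> w' \in U -> tmul (ract w) (ract w') = ract (w ⋆ w').
Proof.
move=> wU w'U; apply/ffunP => A; rewrite ffunE; apply: val_inj.
by rewrite !ractE ?UM // rtrans_mul.
Qed.

Definition in_ract (f : {ffun min_lideal -> min_lideal}) : bool :=
  [exists w in U, f == ract w].

Lemma ract_in w : w \in U -> in_ract (ract w).
Proof. by move=> wU; apply/existsP; exists w; rewrite wU eqxx. Qed.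

Lemma in_ract_tmul f g : in_ract f -> in_ract g -> in_ract (tmul f g).
Proof.
case/existsP => w /andP [wU /eqP ->]; case/existsP => w' /andP [w'U /eqP ->].
by rewrite tmul_ract // ract_in ?UM.
Qed.

Definition ract_sg : finSemigroup :=
  sub_sg (T := trans_sg min_lideal) in_ract_tmul (ex_intro in_ract _ (ract_in epsU)).

Definition ract_elt (t : T) : ract_sg :=
  insubd (exist in_ract _ (ract_in epsU) : ract_sg) (ract t).

Lemma ract_eltE t : t \in U -> val (ract_elt t) = ract t.
Proof. by move=> tU; rewrite val_insubd ract_in. Qed.

Lemma ract_elt_mul : {in U &, {morph ract_elt : x y / x ⋆ y}}.
Proof. by move=> x y xU yU; apply: val_inj; rewrite /= !ract_eltE ?UM // tmul_ract. Qed.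

Lemma fullconst_ract_sg : fullconst ract_sg.
Proof.
exists min_lideal, val; split=> //; first exact: val_inj.
move=> A; case/existsP: (valP A) => q /andP [qU /eqP eA].
have eqU : eps ⋆ q \in U by rewrite UM.
exists (ract_elt (eps ⋆ q)); rewrite ract_eltE //; apply/ffunP => B; apply: val_inj.
rewrite ractE // ffunE eA; case/existsP: (valP B) => q' /andP [q'U /eqP ->].
by rewrite rtrans_lideal lideal_eps_const.
Qed.

Lemma ract_sg_div : divides ract_sg T.
Proof.
exists (fun t => if t \in U then Some (ract_elt t) else None); split.
  move=> x y a b; case xU: (x \in U) => // -[<-]; case yU: (y \in U) => // -[<-].
  by rewrite UM // ract_elt_mul.
move=> f; case/existsP: (valP f) => w /andP [wU /eqP ef].
by exists w; rewrite wU; congr Some; apply: val_inj; rewrite ract_eltE.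
Qed.

Lemma ract_elt_sep q w w' : q \in U -> w \in U -> w' \in U ->
  ract_elt w = ract_elt w' -> omega (eps ⋆ q ⋆ w) = omega (eps ⋆ q ⋆ w').
Proof.
move=> qU wU w'U e.
have Lq : is_min_lideal (lideal (eps ⋆ q)) by apply/existsP; exists q; rewrite qU eqxx.
pose L : min_lideal := exist is_min_lideal _ Lq.
have : val (ract w L) = val (ract w' L).
  by rewrite -!ract_eltE // e.
rewrite !ractE //= !rtrans_lideal => eL.
set a := eps ⋆ q ⋆ w; set b := eps ⋆ q ⋆ w'.
have ea : eps ⋆ a = a by rewrite /a !fs_assoc epsI.
have eb : eps ⋆ b = b by rewrite /b !fs_assoc epsI.
have : b \in lideal a by rewrite eL -{1}eb; apply/imsetP; exists eps.
by case/imsetP => y yU bya; apply: (omega_eq_H _ yU) => //; rewrite /a !UM.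
Qed.
End MinimalIdempotent.

Lemma fullconst_separator (T : finSemigroup) (U : {set T}) (eps : T) :
  mul_closed U -> min_idempotent U eps ->
  exists (W : finSemigroup) (k : T -> W),
    [/\ fullconst W, divides W T, {in U &, {morph k : x y / x ⋆ y}} &
        forall q w w', q \in U -> w \in U -> w' \in U ->
          k w = k w' -> omega (eps ⋆ q ⋆ w) = omega (eps ⋆ q ⋆ w')].
Proof.
move=> UM [epsU epsI eps_min]; exists (ract_sg UM epsU), (ract_elt UM epsU); split.
- exact: fullconst_ract_sg.
- exact: ract_sg_div.
- exact: ract_elt_mul.
- exact: ract_elt_sep.
Qed.

Lemma min_idempotent_image (T T' : finSemigroup) (h : T -> T') (U : {set T}) eps :
  hom h -> mul_closed U -> min_idempotent U eps ->
  mul_closed (h @: U) /\ min_idempotent (h @: U) (h eps).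
Proof.
move=> hh UM [epsU epsI eps_min]; split.
  by move=> _ _ /imsetP [x xU ->] /imsetP [y yU ->]; rewrite -hh imset_f ?UM.
split; [exact: imset_f | by rewrite -hh epsI |].
move=> _ /imsetP [w wU ->]; have [x [y [xU yU ->]]] := eps_min w wU.
by exists (h x), (h y); rewrite !imset_f // !hh.
Qed.

(** * Pseudoidentities *)

Definition asbool (P : Prop) : bool := if excluded_middle_informative P then true else false.

Lemma asboolP P : reflect P (asbool P).
Proof. by rewrite /asbool; case: excluded_middle_informative => h; constructor. Qed.

Lemma sat_pv (A : finType) (p q : rawop A) :
  natural p -> natural q -> pseudovariety (sat p q).
Proof.
move=> np nq; split.
- move=> S T f hf sf satS g; case: (fs_ne S) => s0.
  pose g' a := odflt s0 [pick x | f x == g a].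
  have -> : g = (fun a => f (g' a)).
    apply: functional_extensionality => a; rewrite /g'.
    by case: pickP => [x /eqP //|]; case: (sf (g a)) => x ex /(_ x); rewrite ex eqxx.
  by rewrite -np // -nq // satS.
- by move=> S T f hf inf satS g; apply: inf; rewrite np // nq // satS.
- by move=> g; case: (p _ g); case: (q _ g).
- move=> S T satS satT g.
  have h1 : hom (fun x : prod_sg S T => x.1) by [].
  have h2 : hom (fun x : prod_sg S T => x.2) by [].
  move: (np _ _ _ h1 g) (nq _ _ _ h1 g) (np _ _ _ h2 g) (nq _ _ _ h2 g) => /=.
  by case: (p _ g) (q _ g) => [? ?] [? ?] /= -> -> -> ->; rewrite satS satT.
Qed.

Lemma ezu_omega_natural (A : finType) (e : implop (option A)) (u : implop A) :
  natural (ezu_omega e u).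
Proof.
move=> T T' phi hphi f; rewrite /ezu_omega hom_omega // !hphi.
by rewrite (io_nat e hphi) (io_nat u hphi).
Qed.

Section ImplicitOperations.
Variable B : finType.

Lemma implop_mul_natural (x y : implop B) : natural (rmul (io x) (io y)).
Proof. by move=> T T' phi hphi f; rewrite /rmul hphi (io_nat x hphi) (io_nat y hphi). Qed.
Definition implop_mul (x y : implop B) : implop B := ImplOp (implop_mul_natural x y).

Definition implop_var (b : B) : implop B := @ImplOp B (fun T f => f b) (fun _ _ _ _ _ => erefl).

Variables (T : finSemigroup) (F : B -> T).

Definition values : {set T} := [set x | asbool (exists w : implop B, io w T F = x)].

Lemma values_io w : io w T F \in values.
Proof. by rewrite inE; apply/asboolP; exists w. Qed.

Lemma valuesP x : x \in values -> exists w : implop B, io w T F = x.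
Proof. by rewrite inE => /asboolP. Qed.

Lemma values_mul_closed : mul_closed values.
Proof. by move=> x y /valuesP [w <-] /valuesP [w' <-]; exact: values_io (implop_mul w w'). Qed.

Lemma values_min_idempotent e :
  idem_implop e -> in_minimal_ideal e -> min_idempotent values (io e T F).
Proof.
move=> ide mine; set eps := io e T F.
have epsI : eps ⋆ eps = eps by exact: ide.
split=> //; first exact: values_io.
move=> _ /valuesP [w <-]; case: (mine w) => ox [oy /(_ T F) eo]; rewrite -/eps in eo.
exists (if ox is Some x then eps ⋆ io x T F else eps),
       (if oy is Some y then io y T F ⋆ eps else eps).
split; first by case: ox {eo} => *; rewrite ?values_mul_closed ?values_io.
  by case: oy {eo} => *; rewrite ?values_mul_closed ?values_io.
transitivity (eps ⋆ eps ⋆ eps); first by rewrite !epsI.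
by rewrite {2}eo; case: ox {eo} => [x|]; case: oy => [y|]; rewrite /omul_r /omul_l /rmul ?fs_assoc.
Qed.
End ImplicitOperations.

Definition implop_lift (A : finType) (u : implop A) : implop (option A) :=
  @ImplOp (option A) (fun T f => io u T (fun a => f (Some a)))
    (fun T T' phi hphi f => io_nat u hphi (fun a => f (Some a))).

(* [W] is the right action of the values at [F] of all implicit operations on their minimal left ideals. *)
Lemma ezu_omega_witness (A : finType) (u v : implop A) (e : implop (option A))
    (T : finSemigroup) (F : option A -> T) :
  idem_implop e -> in_minimal_ideal e -> ezu_omega e u F <> ezu_omega e v F ->
  exists W, [/\ fullconst W, divides W T & ~ sat (io u) (io v) W].
Proof.
move=> ide mine neq; have UM := values_mul_closed (F := F).
have [W [k [fcW dWT kM ksep]]] := fullconst_separator UM (values_min_idempotent F ide mine).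
exists W; split => // satW; apply: neq.
pose Z := sub_sg (P := fun x => x \in values F) UM (ex_intro (fun x => x \in values F) _ (values_io F e)).
have hval : hom (fun z : Z => val z) by [].
have hk : hom (fun z : Z => k (val z)) by move=> x y; exact: kM (valP x) (valP y).
pose FZ a : Z := exist _ (F (Some a)) (values_io F (implop_var (Some a))).
have k_io (w : implop A) :
    io w W (fun a => k (F (Some a))) = k (io w T (fun a => F (Some a))).
  by rewrite -[LHS](io_nat w hk FZ) (io_nat w hval FZ).
have := satW (fun a => k (F (Some a))); rewrite !k_io.
exact: ksep (values_io F (implop_var None)) (values_io F (implop_lift u))
            (values_io F (implop_lift v)).
Qed.

Lemma bar_ezu_omega_sep (S : finSemigroup) (A : finType) (u v : implop A)
    (e : implop (option A)) (f : A -> S) :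
  io u S f <> io v S f -> ~ sat (ezu_omega e u) (ezu_omega e v) (bar S).
Proof.
move=> neq satb; case: (Sdot_unit S) => i [_ inj _].
pose F o := if o is Some a then bar_rmul (f a) else bar_cst i.
have ezuE (w : implop A) : ezu_omega e w F = bar_cst (act i (io w S f)).
  rewrite /ezu_omega (_ : F None = bar_cst i) //.
  rewrite (_ : (fun a => F (Some a)) = (fun a => bar_rmul (f a))) //.
  by rewrite -(io_nat w (@bar_rmul_hom S)) bar_cstl bar_cst_rmul omega_id // bar_cstl.
move: (satb F); rewrite !ezuE => -[] /ffunP /(_ i); rewrite !ffunE => /inj.
exact: neq.
Qed.

Lemma Excl_bar (S : finSemigroup) (A : finType) (u v : implop A) (e : implop (option A)) :
  (forall T, Excl S T <-> sat (io u) (io v) T) -> idem_implop e -> in_minimal_ideal e ->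
  forall T, Excl (bar S) T <-> sat (ezu_omega e u) (ezu_omega e v) T.
Proof.
move=> ExclS ide mine T; split => [exT|satT pvT].
- apply: NNPP => /not_all_ex_not [F neq].
  have [W [fcW dWT nsatW]] := ezu_omega_witness ide mine neq.
  have pvWS : pv_of W S by apply: NNPP => /ExclS.
  apply: exT; apply: (bar_fc_gen (gen_pv _)).
  apply: (gen_min (gen_pv _)) pvWS => S' isoWS'.
  apply: (pv_iso (gen_pv _) _ isoWS'); apply: gen_in; split => //.
  exact: pv_div (gen_pv _) (gen_in (iso_refl T)) dWT.
- have : ~ sat (io u) (io v) S by move/ExclS; apply; exact: gen_in (iso_refl S).
  move=> /not_all_ex_not [f neq]; apply: (bar_ezu_omega_sep (e := e) neq).
  apply: (gen_min (sat_pv (ezu_omega_natural e u) (ezu_omega_natural e v))) pvT => T' iT.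
  exact: pv_iso (sat_pv (ezu_omega_natural e u) (ezu_omega_natural e v)) satT iT.
Qed.

(** * Join irreducibility *)

Lemma partial_hom_preimage (P B S : finSemigroup) (Phi : P -> option B) (g : S -> B) :
  partial_hom Phi -> (forall b, exists z, Phi z = Some b) -> hom g -> injective g ->
  exists (D : finSemigroup) (j : D -> P) (phi : D -> S),
    [/\ hom j, hom phi, (forall s, exists d, phi d = s)
      & forall d, Phi (j d) = Some (g (phi d))].
Proof.
move=> hPhi sPhi hg ig; case: (fs_ne S) => s0.
pose inD z := [exists s, Phi z == Some (g s)].
have mulD x y : inD x -> inD y -> inD (x ⋆ y).
  move=> /existsP [s /eqP es] /existsP [t /eqP et]; apply/existsP; exists (s ⋆ t).
  by rewrite (hPhi _ _ _ _ es et) hg.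
have exD : exists z, inD z.
  by case: (sPhi (g s0)) => z ez; exists z; apply/existsP; exists s0; rewrite ez.
pose phi (d : sub_sg mulD exD) := odflt s0 [pick s | Phi (val d) == Some (g s)].
have phiE d : Phi (val d) = Some (g (phi d)).
  rewrite /phi; case: pickP => [s /eqP //|].
  by case/existsP: (valP d) => s es /(_ s); rewrite es.
exists (sub_sg mulD exD), val, phi; split => //.
- move=> d d'; apply: ig; apply: Some_inj; rewrite hg -phiE.
  exact: hPhi (phiE d) (phiE d').
- move=> s; have [z ez] := sPhi (g s).
  have Dz : inD z by apply/existsP; exists s; rewrite ez.
  by exists (exist _ z Dz); apply: ig; apply: Some_inj; rewrite -phiE ez.
Qed.

(* With [q] mapped to the constant [1] of [S^bullet], [(eps q d)^omega] maps to the constant [1.d], so distinct elements of [S] give distinct idempotents. Some factor [T] of the product still separates them, and then so does a full-constant divisor of [T]. *)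
Lemma fc_gen_of_bar_div_finprod (K : sgClass) (S P : finSemigroup) :
  finprod K P -> divides (bar S) P ->
  gen (fun W => fullconst W /\ exists2 T, K T & divides W T) S.
Proof.
move=> fP [Phi [hPhi sPhi]]; case: (Sdot_unit S) => i [_ inj _].
have [D [j [phi [hj hphi sphi jE]]]] :=
  partial_hom_preimage hPhi sPhi (@bar_rmul_hom S) (@bar_rmul_inj S).
pose Z : {set P} := [set z | Phi z != None].
have inZ z a : Phi z = Some a -> z \in Z by move=> e; rewrite inE e.
have ZM : mul_closed Z.
  move=> x y; rewrite !inE; case ex: (Phi x) => [a|] // _; case ey: (Phi y) => [b|] // _.
  by rewrite (hPhi _ _ _ _ ex ey).
have [q Phiq] := sPhi (bar_cst i).
have [eps [epsZ epsI eps_min]] := exists_min_idempotent ZM (inZ _ _ Phiq).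
have [c Phieps] : exists c, Phi eps = Some c.
  by move: epsZ; rewrite inE; case: (Phi eps) => // c _; exists c.
have Phi_omega d : Phi (omega (eps ⋆ q ⋆ j d)) = Some (bar_cst (act i (phi d))).
  apply: (partial_hom_omega hPhi); last by rewrite bar_cstl.
  by rewrite (hPhi _ _ _ _ (hPhi _ _ _ _ Phieps Phiq) (jE d)) bar_cstl bar_cst_rmul.
apply: (pv_separated_quotient (gen_pv _) hphi sphi) => d d' neq.
have : omega (eps ⋆ q ⋆ j d) <> omega (eps ⋆ q ⋆ j d').
  move=> /(congr1 Phi); rewrite !Phi_omega => -[] /ffunP /(_ i); rewrite !ffunE => /inj.
  exact: neq.
case/(finprod_separates fP) => T [h [hh KT]]; rewrite !hom_omega // !hh => neqh.
have [hZM heps] := min_idempotent_image hh ZM (And3 epsZ epsI eps_min).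
have [W [k [fcW dWT kM ksep]]] := fullconst_separator hZM heps.
have jZ d0 : h (j d0) \in h @: Z by rewrite imset_f // (inZ _ _ (jE d0)).
exists W, (fun d0 => k (h (j d0))); split.
- by move=> x y; rewrite hj hh kM.
- by apply: gen_in; split => //; exists T.
- by move=> /(ksep _ _ _ (imset_f h (inZ _ _ Phiq)) (jZ d) (jZ d')).
Qed.

Lemma bar_pv_join_irreducible (V : sgClass) :
  join_irreducible V -> join_irreducible (bar_pv V).
Proof.
move=> jV XX pvXX barV.
pose XX' Y := exists2 X, XX X & Y = fc_gen X.
have pvXX' Y : XX' Y -> pseudovariety Y by case=> X _ ->; exact: gen_pv.
suff /(jV XX' pvXX') [_ [X XXX ->] VX] : subclass V (join XX').
  by exists X => //; exact: bar_pv_sub (pvXX X XXX) VX.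
move=> S VS; have bS : bar_pv V (bar S) by apply: gen_in; exists S => //; exact: iso_refl.
have [P fP dP] := gen_div_finprod (barV _ bS).
apply: (gen_min (gen_pv _)) (fc_gen_of_bar_div_finprod fP dP) => W [fcW [T [X XXX XT] dWT]].
apply: gen_in; exists (fc_gen X); first by exists X.
by apply: gen_in; split=> //; exact: pv_div (pvXX X XXX) XT dWT.
Qed.

Lemma bar_pv_of (S : finSemigroup) T : bar_pv (pv_of S) T <-> pv_of (bar S) T.
Proof.
split.
- apply: (bar_pv_sub (gen_pv _)); apply: (gen_min (gen_pv _)) => S' iSS'.
  apply: (pv_iso (gen_pv _) _ iSS'); apply: fc_gen_of_bar; exact: gen_in (iso_refl _).
- apply: (gen_min (gen_pv _)) => T' iT'.
  by apply: gen_in; exists S => //; exact: gen_in (iso_refl S).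
Qed.

Lemma join_irreducible_eq (V1 V2 : sgClass) : (forall T, V1 T <-> V2 T) ->
  join_irreducible V1 -> join_irreducible V2.
Proof.
move=> eqV jV1 XX pvXX sub; have [S /eqV /sub // | X XXX VX] := jV1 XX pvXX.
by exists X => // S /eqV /VX.
Qed.

Theorem theorem4p3 :
  (forall V : sgClass, pseudovariety V -> join_irreducible V ->
     join_irreducible (bar_pv V)) /\
  (forall S : finSemigroup, join_irreducible (pv_of S) ->
     join_irreducible (pv_of (bar S))) /\
  (forall (S : finSemigroup) (A : finType) (u v : implop A)
          (e : implop (option A)),
     (forall T, Excl S T <-> sat (io u) (io v) T) ->
     idem_implop e -> in_minimal_ideal e ->
     forall T, Excl (bar S) T <-> sat (ezu_omega e u) (ezu_omega e v) T).
Proof.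
split; first by move=> V _; exact: bar_pv_join_irreducible.
split; last exact: Excl_bar.
by move=> S /bar_pv_join_irreducible; apply: join_irreducible_eq => T; exact: bar_pv_of.
Qed.
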